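(* Let $N\ge 0$ be an integer, let $h>0$, and let $T^{(i-1)},T^{(i)},T^{(i+1)}$ be three consecutive closed intervals of length $h$ on the real line (so $T^{(i-1)}=[x_{i-1/2}-h,x_{i-1/2}]$, $T^{(i)}=[x_{i-1/2},x_{i+1/2}]$, $T^{(i+1)}=[x_{i+1/2},x_{i+1/2}+h]$ with $x_{i+1/2}-x_{i-1/2}=h$), and let $\mathcal{S}^{(i)}=T^{(i-1)}\cup T^{(i)}\cup T^{(i+1)}$. For each $j\in\{i-1,i,i+1\}$ let $v^{(j)}$ be a given real polynomial of degree at most $N$ on $T^{(j)}$. Then there exists exactly one real polynomial $w$ of degree at most $M=3N+2$ on $\mathcal{S}^{(i)}$ such that $$\int_{T^{(j)}} w(x)\,\varphi(x)\,dx=\int_{T^{(j)}} v^{(j)}(x)\,\varphi(x)\,dx\qquad\text{for every polynomial }\varphi\text{ of degree at most }N\text{ and every } j\in\{i-1,i,i+1\}.$$ Equivalently, in matrix form: let $P_k$ denote the Legendre polynomial of degree $k$ on $[-1,1]$, set $a_{k,\ell}=\int_{-1}^1 P_k(s)P_\ell(s+2)\,ds$, $b_{k,\ell}=(-1)^{k+\ell}a_{k,\ell}$ and $c_{k,\ell}=\tfrac12(a_{k,\ell}+b_{k,\ell})$. Then the $(2N+2)\times(2N+2)$ matrix $B$ whose first $N+1$ rows are $(a_{k,N+1},\dots,a_{k,3N+2})$, $k=0,\dots,N$, and whose last $N+1$ rows are $(c_{k,N+1},\dots,c_{k,3N+2})$, $k=0,\dots,N$, is invertible, and consequently the reconstruction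 problem above has a unique solution.
   Context: This is the ''reconstruction'' (inverse $L^2$-projection) step of $P_NP_M$ schemes on the three-cell central stencil: the reconstructed polynomial $w$ of degree $M$ on the whole stencil is required to have the same moments as the given piecewise polynomial data of degree $N$ on each of the three cells, tested against all polynomials of degree at most $N$. The Legendre polynomials $P_k$ are the standard ones on $[-1,1]$ (orthogonal in $L^2(-1,1)$, $\int_{-1}^1 P_k^2=2/(2k+1)$). *)

From mathcomp Require Import all_boot all_order all_algebra.
Set Implicit Arguments. Unset Strict Implicit. Unset Printing Implicit Defensive.
Import Order.TTheory GRing.Theory Num.Theory.
Local Open Scope ring_scope.

Definition primp (R : realFieldType) (p : {poly R}) : {poly R} :=
  \poly_(i < (size p).+1) (if i is k.+1 then p`_k / k.+1%:R else 0).

(* Riemann/Lebesgue integral of the polynomial function p over [a,b],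
   computed exactly via the antiderivative (fundamental theorem of calculus). *)
Definition pint (R : realFieldType) (p : {poly R}) (a b : R) : R :=
  (primp p).[b] - (primp p).[a].

Definition legendre (R : realFieldType) (n : nat) : {poly R} :=
  ((2%:R ^+ n * n`!%:R)^-1) *: (('X ^+ 2 - 1) ^+ n)^`(n).

Definition acoef (R : realFieldType) (k l : nat) : R :=
  pint (legendre R k * (legendre R l \Po ('X + 2%:P))) (-1) 1.

Definition bcoef (R : realFieldType) (k l : nat) : R :=
  (-1) ^+ (k + l) * acoef R k l.

Definition ccoef (R : realFieldType) (k l : nat) : R :=
  (acoef R k l + bcoef R k l) / 2%:R.

Definition Bmat (R : realFieldType) (N : nat) : 'M[R]_(N.+1 + N.+1) :=
  col_mx (\matrix_(k < N.+1, l < N.+1 + N.+1) acoef R k (N.+1 + l))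
         (\matrix_(k < N.+1, l < N.+1 + N.+1) ccoef R k (N.+1 + l)).

(* Left endpoint of cell T^(i-1+j), j = 0,1,2, given x_{i-1/2} = x0. *)
Definition cell_left (R : realFieldType) (x0 h : R) (j : 'I_3) : R :=
  x0 - h + (j : nat)%:R * h.

From mathcomp Require Import all_boot all_order all_algebra.
From mathcomp Require Import ring lra zify.
Set Implicit Arguments. Unset Strict Implicit. Unset Printing Implicit Defensive.
Import Order.TTheory GRing.Theory Num.Theory.
Local Open Scope ring_scope.

(* If w has degree < m n and is orthogonal to all polynomials of degree < n on
   each of m adjacent cells [c_t, c_(t+1)], then its n-fold antiderivative G
   vanishing to order n at c_0 also vanishes to order n at every breakpoint c_t:
   integrating by parts moves the orthogonality onto the derivatives of G. So G,
   of degree < (m + 1) n, is divisible by the product of the (X - c_t)^n, whence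
   G = 0 and w = 0. The m n moments are thus unisolvent on polynomials of degree
   < m n, which gives existence and uniqueness of the reconstruction.
   If u B^T = 0, then w = sum_l u_l P_(N+1+l) has degree <= 3N+2 and is
   orthogonal to degree <= N on [-1,1] by orthogonality of the P_k. The a-rows
   are the Legendre moments of w(. + 2) on [-1,1]; since b = 2c - a and P_k has
   the parity of k, the b-rows are those of w(. - 2). So w is also orthogonal on
   [1,3] and [-3,-1], hence w = 0 and u = 0. *)

Section GradedBasis.

Variables (R : fieldType) (B : nat -> {poly R}).
Hypothesis size_B : forall k, size (B k) = k.+1.

Lemma graded_basis_vanish (L : {poly R} -> R) n :
  {morph L : p q / p + q >-> p + q} -> (forall c p, L (c *: p) = c * L p) ->
  (forall k, (k < n)%N -> L (B k) = 0) ->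
  forall p : {poly R}, (size p <= n)%N -> L p = 0.
Proof.
move=> L_add L_scale; elim: n => [|n IH] LB p size_p.
  move: size_p; rewrite leqn0 size_poly_eq0 => /eqP->.
  by rewrite -(scale0r 0) L_scale mul0r.
have lcB : lead_coef (B n) != 0 by rewrite lead_coef_eq0 -size_poly_gt0 size_B.
pose c := p`_n / lead_coef (B n).
rewrite -(subrK (c *: B n) p) L_add L_scale LB // mulr0 addr0.
apply: IH => [k /ltnW/LB //|]; apply/leq_sizeP => j le_nj.
rewrite coefB coefZ; move: le_nj; rewrite leq_eqVlt => /orP[/eqP<-|lt_nj].
  have -> : (B n)`_n = lead_coef (B n) by rewrite lead_coefE size_B.
  by rewrite /c divfK // subrr.
by rewrite !nth_default ?mulr0 ?subr0 ?size_B // (leq_trans size_p).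
Qed.

Lemma graded_basis_free m n (x : nat -> R) :
  \sum_(l < n) x l *: B (m + l)%N = 0 -> forall l, (l < n)%N -> x l = 0.
Proof.
elim: n => [|n IH] //; rewrite big_ord_recr /= => sum0.
have xn0 : x n = 0.
  have /eqP := congr1 (fun p : {poly R} => p`_(m + n)) sum0.
  rewrite coefD coef_sum big1 => [|i _]; last first.
    by rewrite coefZ nth_default ?mulr0 // size_B; have := ltn_ord i; lia.
  rewrite add0r coefZ coef0.
  have -> : (B (m + n))`_(m + n) = lead_coef (B (m + n)) by rewrite lead_coefE size_B.
  rewrite mulf_eq0 lead_coef_eq0 -size_poly_eq0 size_B orbF.
  by move/eqP.
move: sum0; rewrite xn0 scale0r addr0 => /IH x0 l; rewrite ltnS leq_eqVlt.
by case/orP => [/eqP->|/x0].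
Qed.

End GradedBasis.

Section Unisolvence.

Variables (R : fieldType) (I : finType) (L : I -> {poly R} -> R).
Hypothesis L_add : forall i, {morph L i : p q / p + q >-> p + q}.
Hypothesis L_scale : forall i c p, L i (c *: p) = c * L i p.

Lemma unisolvent_moments :
  (forall p : {poly R}, (size p <= #|I|)%N -> (forall i, L i p = 0) -> p = 0) ->
  forall y : I -> R, exists! p : {poly R}, (size p <= #|I|)%N /\ forall i, L i p = y i.
Proof.
move=> L_inj y.
have L0 i : L i 0 = 0 by rewrite -(scale0r 0) L_scale mul0r.
pose M : 'M[R]_#|I| := \matrix_(k, c) L (enum_val c) 'X^k.
have mulM x : x *m M = \row_c L (enum_val c) (rVpoly x).
  apply/rowP => c; rewrite !mxE /rVpoly poly_def (big_morph _ (L_add _) (L0 _)).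
  by apply: eq_bigr => k _; rewrite valK L_scale mxE.
have M_unit : M \in unitmx.
  rewrite unitmxE unitfE; apply/det0P => -[x x_neq0]; rewrite mulM => /rowP xM0.
  suff x0 : rVpoly x = 0 by move: x_neq0; rewrite -[x]rVpolyK x0 linear0 eqxx.
  apply: L_inj (size_poly _ _) _ => i.
  by have := xM0 (enum_rank i); rewrite !mxE enum_rankK.
pose x := \row_c y (enum_val c) *m invmx M.
exists (rVpoly x); split.
  split => [|i]; first exact: size_poly.
  by have /rowP/(_ (enum_rank i)) := mulM x; rewrite mulmxKV // !mxE enum_rankK.
move=> q [size_q Lq]; apply/eqP; rewrite eq_sym -subr_eq0; apply/eqP/L_inj => [|i].
  by rewrite (leq_trans (size_polyD _ _)) // size_polyN geq_max size_q size_poly.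
have /rowP/(_ (enum_rank i)) := mulM x; rewrite mulmxKV // !mxE enum_rankK.
by rewrite -scaleN1r L_add L_scale Lq => <-; rewrite mulN1r subrr.
Qed.

End Unisolvence.

Section PolyRoots.

Variable R : numFieldType.
Implicit Types p q : {poly R}.

Lemma size_deriv p : size p^`() = (size p).-1.
Proof.
have [/size1_polyC-> | lt1p] := leqP (size p) 1.
  by rewrite derivC size_poly0 size_polyC; case: (_ != 0).
rewrite /deriv size_poly_eq // prednK; last lia.
rewrite mulrn_eq0 negb_or -lead_coefE lead_coef_eq0 -size_poly_gt0.
by rewrite -lt0n ltn_predRL lt1p (ltnW lt1p).
Qed.

Lemma deriv_eq0 p : p^`() = 0 -> p = (p`_0)%:P.
Proof.
move=> dp0; apply: size1_polyC; have := size_deriv p.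
by rewrite dp0 size_poly0 -subn1 => /esym/eqP; rewrite subn_eq0.
Qed.

Lemma size_derivn p n : size p^`(n) = (size p - n)%N.
Proof. by elim: n => [|n IH]; rewrite ?subn0 // derivnS size_deriv IH subnS. Qed.

Lemma derivn_mulXsubC q b j :
  (q * ('X - b%:P))^`(j.+1) = q^`(j.+1) * ('X - b%:P) + q^`(j) *+ j.+1.
Proof.
elim: j => [|j IH]; first by rewrite !derivn1 derivM derivXsubC mulr1.
by rewrite derivnS IH derivD derivM derivXsubC mulr1 derivMn -addrA -mulrS.
Qed.

Lemma dvdp_XsubCX_derivn b n j p :
  ('X - b%:P) ^+ (n + j) %| p -> ('X - b%:P) ^+ n %| p^`(j).
Proof.
have dvdp_deriv k q : ('X - b%:P) ^+ k.+1 %| q -> ('X - b%:P) ^+ k %| q^`().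
  case/dvdpP => s ->; rewrite derivM deriv_exp derivXsubC mul1r dvdp_add //.
    by rewrite dvdp_mull // dvdp_exp2l.
  by rewrite -mulr_natr dvdp_mull // dvdp_mulr.
elim: j n p => [|j IH] n p; first by rewrite addn0.
by rewrite addnS derivSn => /dvdp_deriv/IH.
Qed.

Lemma dvdp_XsubCX_derivn_root b n p :
  ('X - b%:P) ^+ n %| p <-> forall j, (j < n)%N -> p^`(j).[b] = 0.
Proof.
split=> [dvd_p j lt_jn | roots_p].
  apply/eqP; rewrite -/(root _ b) root_factor_theorem.
  have dvd_pj : ('X - b%:P) ^+ (n - j) %| p^`(j).
    by apply: dvdp_XsubCX_derivn; rewrite subnK // ltnW.
  apply: dvdp_trans dvd_pj; rewrite -{1}(expr1 ('X - b%:P)) dvdp_exp2l //.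
  by rewrite subn_gt0.
elim: n p roots_p => [|n IH] p roots_p; first by rewrite expr0 dvd1p.
have /factor_theorem[q p_eq] : root p b by rewrite /root -(derivn0 p) roots_p.
rewrite p_eq in roots_p *; rewrite exprSr dvdp_mul2r ?polyXsubC_eq0 //.
apply: IH => j lt_jn.
have := roots_p j.+1 lt_jn; rewrite derivn_mulXsubC hornerD hornerM hornerXsubC.
by rewrite subrr mulr0 add0r hornerMn => /eqP; rewrite mulrn_eq0 => /eqP.
Qed.

Lemma prod_XsubCX_dvdp (s : seq R) n p : uniq s ->
  (forall x, x \in s -> ('X - x%:P) ^+ n %| p) ->
  (\prod_(x <- s) ('X - x%:P)) ^+ n %| p.
Proof.
elim: s => [|x s IH] /=; first by rewrite big_nil expr1n dvd1p.
case/andP => x_notin_s uniq_s dvd_p; rewrite big_cons exprMn Gauss_dvdp.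
  by rewrite dvd_p ?mem_head // IH // => y s_y; rewrite dvd_p // inE s_y orbT.
apply/coprimep_expl/coprimep_expr.
by rewrite coprimep_sym coprimep_XsubC root_prod_XsubC.
Qed.

End PolyRoots.

Section PolyIntegral.

Variable R : realFieldType.
Implicit Types (p q phi : {poly R}) (a b : R).

Lemma deriv_primp p : (primp p)^`() = p.
Proof.
apply/polyP => i; rewrite coef_deriv /primp coef_poly ltnS /=.
case: ltnP => [lt_ip | le_pi]; last by rewrite mul0rn nth_default.
by rewrite -[_ / _ *+ _]mulr_natr divfK // pnatr_eq0.
Qed.

Lemma pint_antideriv P p a b : P^`() = p -> pint p a b = P.[b] - P.[a].
Proof.
move=> dP; have /deriv_eq0 : (primp p - P)^`() = 0.
  by rewrite derivB deriv_primp dP subrr.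
move=> /(congr1 (fun q => q.[b] - q.[a])); rewrite !hornerC subrr !hornerD !hornerN.
rewrite /pint; lra.
Qed.

Lemma pintD p q a b : pint (p + q) a b = pint p a b + pint q a b.
Proof.
rewrite (@pint_antideriv (primp p + primp q)) ?derivD ?deriv_primp //.
rewrite /pint !hornerD; ring.
Qed.

Lemma pintZ c p a b : pint (c *: p) a b = c * pint p a b.
Proof.
rewrite (@pint_antideriv (c *: primp p)) ?derivZ ?deriv_primp //.
rewrite /pint !hornerZ; ring.
Qed.

Lemma pint0 a b : pint 0 a b = 0.
Proof. by rewrite -(scale0r 0) pintZ mul0r. Qed.

Lemma pintB p q a b : pint (p - q) a b = pint p a b - pint q a b.
Proof. by rewrite -scaleN1r pintD pintZ mulN1r. Qed.

Lemma pint_sum (I : Type) (r : seq I) (F : I -> {poly R}) a b :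
  pint (\sum_(i <- r) F i) a b = \sum_(i <- r) pint (F i) a b.
Proof. exact: (big_morph _ (fun p q => pintD p q a b) (pint0 a b)). Qed.

Lemma pint_split p a b c : pint p a b + pint p b c = pint p a c.
Proof. rewrite /pint; ring. Qed.

Lemma pint_by_parts p q a b :
  pint (p^`() * q) a b = (p * q).[b] - (p * q).[a] - pint (p * q^`()) a b.
Proof.
have := @pint_antideriv (p * q) _ a b (derivM p q); rewrite pintD; lra.
Qed.

Lemma pint_comp_XaddC p c a b :
  pint (p \Po ('X + c%:P)) a b = pint p (a + c) (b + c).
Proof.
rewrite (@pint_antideriv (primp p \Po ('X + c%:P))); last first.
  by rewrite deriv_comp deriv_primp derivD derivX derivC addr0 mulr1.
by rewrite /pint !horner_comp !hornerD !hornerX !hornerC.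
Qed.

Lemma pint_comp_oppX p a b : pint (p \Po (- 'X)) a b = pint p (- b) (- a).
Proof.
rewrite (@pint_antideriv (- (primp p \Po (- 'X)))); last first.
  by rewrite derivN deriv_comp deriv_primp derivN derivX mulrN1 opprK.
rewrite /pint !hornerN !horner_comp !hornerN !hornerX; ring.
Qed.

Lemma pint_graded_ortho (B : nat -> {poly R}) q a b n :
  (forall k, size (B k) = k.+1) ->
  (forall k, (k < n)%N -> pint (B k * q) a b = 0) ->
  forall phi, (size phi <= n)%N -> pint (phi * q) a b = 0.
Proof.
move=> size_B.
apply: (graded_basis_vanish size_B (L := fun phi => pint (phi * q) a b)) => [f g | c f].
  by rewrite /= mulrDl pintD.
by rewrite /= -scalerAl pintZ.
Qed.

Definition primp_at c p := primp p - ((primp p).[c])%:P.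

Lemma deriv_primp_at c p : (primp_at c p)^`() = p.
Proof. by rewrite derivB deriv_primp derivC subr0. Qed.

Lemma primp_at_root c p : (primp_at c p).[c] = 0.
Proof. by rewrite hornerD hornerN hornerC subrr. Qed.

Lemma size_primp_at c p : (size (primp_at c p) <= (size p).+1)%N.
Proof.
rewrite (leq_trans (size_polyD _ _)) // size_polyN size_polyC geq_max size_poly.
by case: (_ != 0).
Qed.

Lemma size_iter_primp_at c k p : (size (iter k (primp_at c) p) <= size p + k)%N.
Proof.
elim: k => [|k IH]; first by rewrite addn0.
by rewrite iterS (leq_trans (size_primp_at _ _)) // addnS ltnS.
Qed.

(* Induction on n with one integration by parts: the constant test function
   gives [F^`(n).[b] = 0], antiderivatives vanishing at [b] give the rest. *)
Lemma ortho_derivn_iff F n a b : (forall j, (j < n)%N -> F^`(j).[a] = 0) ->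
  (forall phi, (size phi <= n)%N -> pint (F^`(n) * phi) a b = 0) <->
  (forall j, (j < n)%N -> F^`(j).[b] = 0).
Proof.
elim: n => [|n IH] roots_a.
  split=> // _ phi; rewrite leqn0 size_poly_eq0 => /eqP->.
  by rewrite mulr0 pint0.
have parts phi :
    pint (F^`(n.+1) * phi) a b = F^`(n).[b] * phi.[b] - pint (F^`(n) * phi^`()) a b.
  by rewrite derivnS pint_by_parts !hornerM roots_a // mul0r subr0.
have {}IH := IH (fun j lt_jn => roots_a j (ltnW lt_jn)).
split=> [ortho j | roots_b phi size_phi].
  have root_n : F^`(n).[b] = 0.
    have := ortho 1; rewrite size_poly1 parts -polyC1 derivC mulr0 pint0 hornerC.
    by rewrite mulr1 subr0; apply.
  have /IH roots_b (psi : {poly R}) : (size psi <= n)%N -> pint (F^`(n) * psi) a b = 0.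
    move=> size_psi; have := ortho (primp_at b psi) (leq_trans (size_primp_at b psi) _).
    rewrite parts deriv_primp_at primp_at_root mulr0 sub0r => /(_ size_psi) /eqP.
    by rewrite oppr_eq0 => /eqP.
  by rewrite ltnS leq_eqVlt => /orP[/eqP-> // | /roots_b].
rewrite parts roots_b // mul0r sub0r (proj2 IH) ?oppr0 // => [j lt_jn|].
  exact: roots_b (ltnW lt_jn).
by rewrite size_deriv -subn1 leq_subLR add1n.
Qed.

Lemma uniq_grid a h m : h != 0 -> uniq [seq a + t%:R * h | t <- iota 0 m].
Proof.
move=> h_neq0; rewrite map_inj_uniq ?iota_uniq // => s t /addrI /(mulIf h_neq0).
by move/eqP; rewrite eqr_nat => /eqP.
Qed.

Lemma ortho_cells_eq0 (c : nat -> R) m n (w : {poly R}) :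
  uniq [seq c t | t <- iota 0 m.+1] -> (size w <= m * n)%N ->
  (forall t, (t < m)%N -> forall phi, (size phi <= n)%N ->
     pint (w * phi) (c t) (c t.+1) = 0) ->
  w = 0.
Proof.
move=> uniq_c size_w ortho.
pose G := iter n (primp_at (c 0%N)) w.
have derivn_G j : (j <= n)%N -> G^`(j) = iter (n - j) (primp_at (c 0%N)) w.
  elim: j => [|j IH] le_jn; first by rewrite subn0.
  rewrite derivnS IH 1?ltnW // (_ : n - j = (n - j.+1).+1)%N; last by lia.
  by rewrite iterS deriv_primp_at.
have G_n : G^`(n) = w by rewrite derivn_G // subnn.
have roots_c0 j : (j < n)%N -> G^`(j).[c 0%N] = 0.
  move=> lt_jn; rewrite derivn_G 1?ltnW // (_ : n - j = (n - j.+1).+1)%N; last by lia.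
  by rewrite iterS primp_at_root.
have ortho_c0 t : (t <= m)%N ->
    forall phi, (size phi <= n)%N -> pint (G^`(n) * phi) (c 0%N) (c t) = 0.
  rewrite G_n; elim: t => [|t IH] le_tm phi size_phi; first by rewrite /pint subrr.
  by rewrite -(pint_split _ _ (c t)) IH ?ortho ?addr0 // ltnW.
pose P := \prod_(x <- [seq c t | t <- iota 0 m.+1]) ('X - x%:P).
have dvd_G : P ^+ n %| G.
  apply: prod_XsubCX_dvdp uniq_c _ => x /mapP[t].
  rewrite mem_iota ltnS => /andP[_ le_tm] ->.
  apply/dvdp_XsubCX_derivn_root/(ortho_derivn_iff (c t) roots_c0).
  exact: ortho_c0.
suff G0 : G = 0 by rewrite -G_n G0 linear0.
apply/eqP; apply: contraT => G_neq0.
have P_neq0 : P ^+ n != 0 by rewrite expf_neq0 // monic_neq0 // monic_prod_XsubC.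
have := dvdp_leq G_neq0 dvd_G; rewrite (polySpred P_neq0) size_exp size_prod_XsubC.
rewrite size_map size_iota /=; have := size_iter_primp_at (c 0%N) n w; rewrite -/G.
by rewrite mulSn => le_G; rewrite ltnNge (leq_trans le_G) // addnC leq_add2l.
Qed.

Lemma moment_reconstruction (c : nat -> R) m n (v : 'I_m -> {poly R}) :
  uniq [seq c t | t <- iota 0 m.+1] ->
  exists! w : {poly R}, (size w <= m * n)%N /\
    forall (t : 'I_m) phi, (size phi <= n)%N ->
      pint (w * phi) (c t) (c t.+1) = pint (v t * phi) (c t) (c t.+1).
Proof.
move=> uniq_c.
pose L (i : 'I_m * 'I_n) p := pint ('X^(i.2) * p) (c i.1) (c i.1.+1).
have momentsP p q (t : 'I_m) : (forall k : 'I_n, L (t, k) p = L (t, k) q) <->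
    forall phi, (size phi <= n)%N ->
      pint (p * phi) (c t) (c t.+1) = pint (q * phi) (c t) (c t.+1).
  split=> [Lpq phi size_phi | pq k]; last first.
    by rewrite /L /= mulrC [_ * q]mulrC pq // size_polyXn.
  apply/eqP; rewrite -subr_eq0 -pintB -mulrBl mulrC; apply/eqP.
  apply: (pint_graded_ortho (B := fun k => 'X^k)) size_phi => [k | k lt_kn].
    exact: size_polyXn.
  by have := Lpq (Ordinal lt_kn); rewrite /L /= mulrBr pintB => ->; rewrite subrr.
have cardI : #|{: 'I_m * 'I_n}| = (m * n)%N by rewrite card_prod !card_ord.
have L_add i : {morph L i : p q / p + q >-> p + q}.
  by move=> p q; rewrite /L mulrDr pintD.
have L_scale i a p : L i (a *: p) = a * L i p by rewrite /L -scalerAr pintZ.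
have L_inj p : (size p <= #|{: 'I_m * 'I_n}|)%N -> (forall i, L i p = 0) -> p = 0.
  rewrite cardI => size_p Lp0; apply: (ortho_cells_eq0 uniq_c size_p) => t lt_tm phi.
  have := proj1 (momentsP p 0 (Ordinal lt_tm)) _ phi; rewrite mul0r pint0; apply.
  by move=> k; rewrite Lp0 /L mulr0 pint0.
have [w [[size_w Lw] w_uniq]] :=
  unisolvent_moments L_add L_scale L_inj (fun i => L i (v i.1)).
exists w; split.
  by split=> [|t]; [rewrite -cardI | apply/momentsP => k; apply: Lw (t, k)].
move=> w' [size_w' mom_w']; apply: w_uniq; split=> [|[t k]]; first by rewrite cardI.
exact: (proj2 (momentsP w' (v t) t) (mom_w' t)).
Qed.

End PolyIntegral.

Section Legendre.

Variable R : realFieldType.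
Implicit Types (p w phi : {poly R}).

Lemma derivn_comp_oppX p n :
  (p \Po - 'X)^`(n) = (-1) ^+ n *: (p^`(n) \Po - 'X).
Proof.
elim: n => [|n IH]; first by rewrite scale1r.
rewrite derivnS IH derivZ deriv_comp derivN derivX -derivnS mulrN1.
by rewrite scalerN exprS mulN1r scaleNr.
Qed.

Lemma legendre_comp_oppX k : legendre R k \Po - 'X = (-1) ^+ k *: legendre R k.
Proof.
have even : ('X ^+ 2 - 1) ^+ k \Po - 'X = ('X ^+ 2 - 1 : {poly R}) ^+ k.
  by rewrite rmorphXn rmorphB rmorph1 rmorphXn /= comp_polyX sqrrN.
have := derivn_comp_oppX (('X ^+ 2 - 1) ^+ k) k; rewrite even /legendre.
set D := (_ ^+ k)^`(k) => D_even.
rewrite comp_polyZ [in RHS]D_even !scalerA; congr (_ *: _).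
by rewrite mulrAC -exprMn mulrNN mulr1 expr1n mul1r.
Qed.

Lemma size_legendre k : size (legendre R k) = k.+1.
Proof.
have c_neq0 : ((2%:R ^+ k * k`!%:R)^-1 : R) != 0.
  by rewrite invr_eq0 mulf_neq0 ?expf_neq0 ?pnatr_eq0 // -lt0n fact_gt0.
have L_neq0 : ('X ^+ 2 - 1 : {poly R}) ^+ k != 0.
  by rewrite expf_neq0 // -size_poly_gt0 -polyC1 size_XnsubC.
rewrite /legendre size_scale // size_derivn polySpred // size_exp.
by rewrite -polyC1 size_XnsubC //=; lia.
Qed.

Lemma legendre_ortho k phi :
  (size phi <= k)%N -> pint (legendre R k * phi) (-1) 1 = 0.
Proof.
move=> size_phi; rewrite /legendre -scalerAl pintZ.
set L := (('X ^+ 2 - 1) ^+ k).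
have roots b : b = 1 \/ b = -1 -> forall j, (j < k)%N -> L^`(j).[b] = 0.
  move=> b_pm1; apply/dvdp_XsubCX_derivn_root.
  have -> : L = ('X - 1%:P) ^+ k * ('X - (-1)%:P) ^+ k.
    by rewrite /L -exprMn polyCN polyC1; congr (_ ^+ _); ring.
  by case: b_pm1 => ->; [apply: dvdp_mulr | apply: dvdp_mull].
rewrite (proj2 (ortho_derivn_iff 1 (roots _ (or_intror erefl)))) ?mulr0 // => j.
by apply: roots; left.
Qed.

Lemma bcoefE k l :
  bcoef R k l = pint (legendre R k * (legendre R l \Po ('X - 2%:P))) (-1) 1.
Proof.
have shift : (legendre R l \Po ('X - 2%:P)) \Po - 'X =
    (-1) ^+ l *: (legendre R l \Po ('X + 2%:P)).
  rewrite -comp_polyA comp_polyB comp_polyX comp_polyC.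
  have -> : - 'X - 2%:P = (- 'X) \Po ('X + 2%:P) :> {poly R}.
    by rewrite raddfN /= comp_polyX opprD.
  by rewrite comp_polyA legendre_comp_oppX comp_polyZ.
have := pint_comp_oppX (legendre R k * (legendre R l \Po ('X - 2%:P))) (-1) 1.
rewrite opprK => <-; rewrite comp_polyM legendre_comp_oppX shift.
by rewrite -scalerAl -scalerAr !pintZ /bcoef /acoef exprD mulrA.
Qed.

Lemma pint_legendre_comp_XaddC_ortho n d w :
  (forall k, (k < n)%N -> pint (legendre R k * (w \Po ('X + d%:P))) (-1) 1 = 0) ->
  forall phi, (size phi <= n)%N -> pint (w * phi) (-1 + d) (1 + d) = 0.
Proof.
move=> moments phi size_phi; rewrite -pint_comp_XaddC comp_polyM mulrC.
apply: (pint_graded_ortho (@size_legendre) moments).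
by rewrite size_comp_poly2 ?size_XaddC.
Qed.

Lemma legendre_moments_cells_eq0 n w : (size w <= 3 * n)%N ->
  (forall k, (k < n)%N -> pint (legendre R k * (w \Po ('X - 2%:P))) (-1) 1 = 0) ->
  (forall phi, (size phi <= n)%N -> pint (w * phi) (-1) 1 = 0) ->
  (forall k, (k < n)%N -> pint (legendre R k * (w \Po ('X + 2%:P))) (-1) 1 = 0) ->
  w = 0.
Proof.
move=> size_w left_cell mid_cell right_cell; pose c t : R := -3 + t%:R * 2.
apply: (@ortho_cells_eq0 R c 3 n w (uniq_grid _ _ _) size_w).
  by rewrite pnatr_eq0.
case=> [|[|[|t]]] // _ phi size_phi.
- have -> : c 0%N = -1 + -2 by rewrite /c; ring.
  have -> : c 1%N = 1 + -2 by rewrite /c; ring.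
  by apply: pint_legendre_comp_XaddC_ortho size_phi; rewrite polyCN.
- have -> : c 1%N = -1 by rewrite /c; ring.
  have -> : c 2%N = 1 by rewrite /c; ring.
  exact: mid_cell.
- have -> : c 2%N = -1 + 2 by rewrite /c; ring.
  have -> : c 3%N = 1 + 2 by rewrite /c; ring.
  exact: pint_legendre_comp_XaddC_ortho right_cell _ size_phi.
Qed.

Lemma Bmat_unit N : Bmat R N \in unitmx.
Proof.
rewrite -unitmx_tr unitmxE unitfE; apply/det0P => -[u u_neq0 /rowP uB0].
pose K := (N.+1 + N.+1)%N.
pose w := \sum_(l < K) u 0 l *: legendre R (N.+1 + l).
have pint_w q k : pint (legendre R k * (w \Po q)) (-1) 1 =
    \sum_(l < K) u 0 l * pint (legendre R k * (legendre R (N.+1 + l) \Po q)) (-1) 1.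
  rewrite linear_sum mulr_sumr pint_sum; apply: eq_bigr => l _.
  by rewrite linearZ -scalerAr pintZ.
have row_a (k : 'I_N.+1) : \sum_(l < K) u 0 l * acoef R k (N.+1 + l) = 0.
  have := uB0 (lshift N.+1 k); rewrite !mxE => row0; rewrite -[RHS]row0.
  by apply: eq_bigr => l _; rewrite mxE /Bmat col_mxEu mxE.
have row_c (k : 'I_N.+1) : \sum_(l < K) u 0 l * ccoef R k (N.+1 + l) = 0.
  have := uB0 (rshift N.+1 k); rewrite !mxE => row0; rewrite -[RHS]row0.
  by apply: eq_bigr => l _; rewrite mxE /Bmat col_mxEd mxE.
have row_b (k : 'I_N.+1) : \sum_(l < K) u 0 l * bcoef R k (N.+1 + l) = 0.
  transitivity (\sum_(l < K)
      (2 * (u 0 l * ccoef R k (N.+1 + l)) - u 0 l * acoef R k (N.+1 + l))).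
    by apply: eq_bigr => l _; rewrite /ccoef; field.
  by rewrite sumrB -mulr_sumr row_a row_c mulr0 subrr.
have w0 : w = 0.
  apply: (legendre_moments_cells_eq0 (n := N.+1)) => [|k lt_kN|phi size_phi|k lt_kN].
  - rewrite (leq_trans (size_sum _ _ _)) //; apply/bigmax_leqP => l _.
    rewrite (leq_trans (size_scale_leq _ _)) // size_legendre.
    by have := ltn_ord l; rewrite /K; lia.
  - rewrite pint_w -[RHS](row_b (Ordinal lt_kN)).
    by apply: eq_bigr => l _; rewrite bcoefE.
  - rewrite mulr_suml pint_sum big1 // => l _.
    by rewrite -scalerAl pintZ legendre_ortho ?mulr0 // (leq_trans size_phi) ?leq_addr.
  - by rewrite pint_w -[RHS](row_a (Ordinal lt_kN)).
move: u_neq0; apply/negP; rewrite negbK; apply/eqP/rowP => l; rewrite mxE.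
have u_free := @graded_basis_free _ _ (@size_legendre) N.+1 K (fun l => u 0 (inord l)).
rewrite -(inord_val l); apply: u_free => //; rewrite -[RHS]w0.
by apply: eq_bigr => i _; rewrite inord_val.
Qed.

End Legendre.

Theorem mainTheorem1 (R : realFieldType) (N : nat) (h x0 : R) (hpos : 0 < h)
  (v : 'I_3 -> {poly R}) (hv : forall j, (size (v j) <= N.+1)%N) :
  Bmat R N \in unitmx /\
  exists! w : {poly R},
    (size w <= (3 * N + 2).+1)%N /\
    forall (j : 'I_3) (phi : {poly R}), (size phi <= N.+1)%N ->
      pint (w * phi) (cell_left x0 h j) (cell_left x0 h j + h) =
      pint (v j * phi) (cell_left x0 h j) (cell_left x0 h j + h).
Proof.
split; first exact: Bmat_unit.
pose c t := x0 - h + t%:R * h.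
have cellE (j : 'I_3) : cell_left x0 h j + h = c j.+1.
  by rewrite /cell_left /c mulrSr mulrDl mul1r addrA.
have [w [[size_w mom_w] w_uniq]] :=
  @moment_reconstruction R c 3 N.+1 v (uniq_grid _ _ (lt0r_neq0 hpos)).
have -> : (3 * N + 2).+1 = (3 * N.+1)%N by lia.
exists w; split.
  by split=> // j phi size_phi; rewrite cellE; apply: mom_w.
move=> w' [size_w' mom_w']; apply: w_uniq; split=> // t phi size_phi.
by rewrite -cellE; apply: mom_w'.
Qed.
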